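(* Let $n<7$, $n\ge2$ be a fixed real number, let $m=(n+3)/2$, let $\nu_1,\nu_2\ge0$ and $T>0$. Let $u_1,\omega_1,\psi_1:[0,T)\times[0,\infty)\times\mathbb{R}\to\mathbb{R}$ be smooth functions which, for each $t$, are even in $r$ (extend to smooth functions on $\mathbb{R}^2$ even in $r$) and which, with all their derivatives, decay rapidly as $r^2+z^2\to\infty$, uniformly on compact time subintervals. Suppose that on $(0,T)\times(0,\infty)\times\mathbb{R}$ $$u_{1,t}+u^ru_{1,r}+u^zu_{1,z}=2u_1\psi_{1,z}+\nu_1\Delta_nu_1,$$ $$\omega_{1,t}+u^r\omega_{1,r}+u^z\omega_{1,z}=(u_1^2)_z+\nu_2\Delta_n\omega_1,$$ $$-\Delta_n\psi_1=\omega_1,$$ where $\Delta_n=\partial_r^2+\frac nr\partial_r+\partial_z^2$, $u^r=-r\psi_{1,z}$ and $u^z=(m-1)\psi_1+r\psi_{1,r}$. Then for all $t\in(0,T)$, $$\frac12\frac{d}{dt}\int_{\mathbb{R}}\int_0^\infty\Big(u_1^2+\frac{7-n}{4}\big(\psi_{1,r}^2+\psi_{1,z}^2\big)\Big)r^n\,dr\,dz=-\nu_1\int_{\mathbb{R}}\int_0^\infty\big(u_{1,r}^2+u_{1,z}^2\big)r^n\,dr\,dz-\nu_2\,\frac{7-n}{4}\int_{\mathbb{R}}\int_0^\infty(\Delta_n\psi_1)^2\,r^n\,dr\,dz .$$ In particular the (nonnegative) generalized energy $\int\!\!\int\big(u_1^2+\frac{7-n}{4}|\nabla\psi_1|^2\big)r^n\,dr\,dz$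 is non-increasing in time, and conserved when $\nu_1=\nu_2=0$.
   Context: This is the ''generalized axisymmetric Boussinesq system'': the density $\Gamma=r^2u_1$ satisfies $\Gamma_t+u^r\Gamma_r+u^z\Gamma_z=\nu_1(\Gamma_{rr}+\frac{n-4}{r}\Gamma_r+\frac{6-2n}{r^2}\Gamma+\Gamma_{zz})$ (equivalent to the stated $u_1$ equation), the source term in the $\omega_1$ equation is $(\Gamma^2/r^4)_z=(u_1^2)_z$, and the term $-(n-3)\psi_{1,z}\omega_1$ of the generalized Navier--Stokes equations is removed. The velocity is $u^r=-(r^{m-1}\psi_1)_z/r^{m-2}$, $u^z=(r^{m-1}\psi_1)_r/r^{m-2}$ with $m=(n+3)/2$, which satisfies $(r^{m-2}u^r)_r+(r^{m-2}u^z)_z=0$. Here $\nabla=(\partial_r,\partial_z)$. *)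

From Stdlib Require Import Reals List.
From Coquelicot Require Import Coquelicot.
Open Scope R_scope.

(** Functions of (t, r, z). *)
Definition fn3 := R -> R -> R -> R.

Definition Dt (f : fn3) : fn3 := fun t r z => Derive (fun s => f s r z) t.
Definition Dr (f : fn3) : fn3 := fun t r z => Derive (fun s => f t s z) r.
Definition Dz (f : fn3) : fn3 := fun t r z => Derive (fun s => f t r s) z.

Inductive dir := dirT | dirR | dirZ.

Definition Dop (d : dir) : fn3 -> fn3 :=
  match d with dirT => Dt | dirR => Dr | dirZ => Dz end.

Fixpoint Dmulti (l : list dir) (f : fn3) : fn3 :=
  match l with nil => f | d :: l' => Dop d (Dmulti l' f) end.

Definition ex_partial (d : dir) (f : fn3) (t r z : R) : Prop :=
  match d with
  | dirT => ex_derive (fun s => f s r z) t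
  | dirR => ex_derive (fun s => f t s z) r
  | dirZ => ex_derive (fun s => f t r s) z
  end.

Definition cont3 (f : fn3) (t r z : R) : Prop :=
  continuous (fun p : R * R * R => f (fst (fst p)) (snd (fst p)) (snd p)) (t, r, z).

Definition smooth_slab (T : R) (f : fn3) : Prop :=
  forall (l : list dir) (t r z : R), 0 < t < T ->
    cont3 (Dmulti l f) t r z /\ forall d, ex_partial d (Dmulti l f) t r z.

Definition even_r (f : fn3) : Prop := forall t r z, f t (- r) z = f t r z.

Definition rapid_decay (T : R) (f : fn3) : Prop :=
  forall (l : list dir) (k : nat) (a b : R), 0 < a -> a <= b -> b < T ->
    exists C : R, forall t r z, a <= t <= b ->
      (1 + r ^ 2 + z ^ 2) ^ k * Rabs (Dmulti l f t r z) <= C.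

Definition Lap (n : R) (f : fn3) : fn3 :=
  fun t r z => Dr (Dr f) t r z + n / r * Dr f t r z + Dz (Dz f) t r z.

Definition int_half_plane (F : R -> R -> R) : R :=
  RInt_gen (fun z => RInt_gen (fun r => F r z) (at_point 0) (Rbar_locally p_infty))
    (Rbar_locally m_infty) (Rbar_locally p_infty).

Definition energy (n : R) (u psi : fn3) (t : R) : R :=
  int_half_plane (fun r z =>
    (u t r z ^ 2 + (7 - n) / 4 * (Dr psi t r z ^ 2 + Dz psi t r z ^ 2))
      * Rpower r n).

From Stdlib Require Import Reals Lra Lia Psatz.
From Coquelicot Require Import Coquelicot.
Open Scope R_scope.

(* With c = (7 - n)/4 the three equations give, pointwise for r > 0, a local balance law

     1/2 d_t (u^2 + c |grad psi|^2)
       = - nu1 |grad u|^2 - nu2 c (Lap_n psi)^2 + r^(-n) d_r (r^n A) + d_z B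

   with explicit fluxes A and B, polynomial in r and in derivatives of u, w, psi.  The
   velocity is not divergence free for the weight r^n (its weighted divergence is
   -(n+1)/2 psi_z), so transport and stretching together contribute c u^2 psi_z, while
   testing the w-equation against psi contributes -c u^2 psi_z: this is why c = (7 - n)/4.
   Integrated against r^n dr dz the fluxes disappear, at infinity by rapid decay and at
   r = 0 because r^n A vanishes there (n >= 1).  On a compact time window all integrands
   are dominated by C / ((1 + r^2)(1 + z^2)), which justifies differentiating under the
   integral sign and the boundary terms. *)

(** * Improper integrals dominated by [1 / (1 + x^2)] *)

Definition lorentz (x : R) : R := / (1 + x ^ 2).

Lemma lorentz_gt0 x : 0 < lorentz x.
Proof. unfold lorentz. apply Rinv_0_lt_compat. nra. Qed.

Lemma lorentz_le1 x : lorentz x <= 1.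
Proof. unfold lorentz. rewrite <- Rinv_1. apply Rinv_le_contravar; nra. Qed.

Lemma continuous_lorentz x : continuous lorentz x.
Proof.
  apply (ex_derive_continuous (K := R_AbsRing) (V := R_NormedModule)).
  unfold lorentz. auto_derive. nra.
Qed.

Lemma is_RInt_lorentz a b : is_RInt lorentz a b (atan b - atan a).
Proof.
  apply (is_RInt_derive atan lorentz).
  - intros x _. unfold lorentz.
    replace (1 + x ^ 2) with (1 + x²) by (unfold Rsqr; ring).
    apply is_derive_atan.
  - intros x _. apply continuous_lorentz.
Qed.

Lemma lorentz_bound_ge0 (f : R -> R) C :
  (forall x, Rabs (f x) <= C * lorentz x) -> 0 <= C.
Proof.
  intros Hf. specialize (Hf 0). pose proof (lorentz_gt0 0). pose proof (Rabs_pos (f 0)).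
  destruct (Rle_or_lt 0 C); nra.
Qed.

Lemma scale_lorentz_le C r z : 0 <= C -> C * lorentz r * lorentz z <= C * lorentz r.
Proof.
  intros HC. rewrite <- (Rmult_1_r (C * lorentz r)) at 2.
  apply Rmult_le_compat_l; [pose proof (lorentz_gt0 r); nra | apply lorentz_le1].
Qed.

Lemma ex_RInt_continuous_R (f : R -> R) a b :
  (forall x, continuous f x) -> ex_RInt f a b.
Proof. intros Hf. apply (ex_RInt_continuous (V := R_CompleteNormedModule)). auto. Qed.

Lemma abs_RInt_le_lorentz (f : R -> R) C a b :
  (forall x, continuous f x) -> (forall x, Rabs (f x) <= C * lorentz x) ->
  Rabs (RInt f a b) <= C * Rabs (atan b - atan a).
Proof.
  intros Hc Hb.
  assert (Hle : forall a b, a <= b -> Rabs (RInt f a b) <= C * Rabs (atan b - atan a)).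
  { clear a b. intros a b Hab.
    apply Rle_trans with (RInt (fun x => C * lorentz x) a b).
    - apply Rle_trans with (RInt (fun x => Rabs (f x)) a b).
      + apply abs_RInt_le; auto. apply ex_RInt_continuous_R; auto.
      + apply RInt_le; auto.
        * apply ex_RInt_continuous_R. intros. apply continuous_Rabs_comp; auto.
        * apply ex_RInt_continuous_R. intros.
          apply (continuous_mult (fun _ => C) lorentz).
          -- apply continuous_const.
          -- apply continuous_lorentz.
    - replace (RInt (fun x => C * lorentz x) a b) with (C * (atan b - atan a)).
      2: { symmetry. apply is_RInt_unique, (is_RInt_scal _ _ _ C _ (is_RInt_lorentz a b)). }
      apply Rmult_le_compat_l; [exact (lorentz_bound_ge0 f C Hb) | apply Rle_abs]. }
  destruct (Rle_or_lt a b) as [Hab|Hab]; auto.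
  rewrite <- opp_RInt_swap by (apply ex_RInt_continuous_R; auto).
  unfold opp; simpl. rewrite Rabs_Ropp.
  replace (atan b - atan a) with (- (atan a - atan b)) by ring.
  rewrite Rabs_Ropp. apply Hle. lra.
Qed.

Lemma filterlim_atan_p_infty : filterlim atan (Rbar_locally p_infty) (locally (PI / 2)).
Proof.
  apply filterlim_locally. intros eps.
  pose proof (continuous_atan 0) as Hc.
  apply filterlim_locally with (eps := eps) in Hc. destruct Hc as [d Hd].
  exists (/ d). intros x Hx.
  assert (Hd0 : 0 < d) by apply cond_pos.
  assert (Hx0 : 0 < x) by (pose proof (Rinv_0_lt_compat d Hd0); lra).
  assert (Hix : 0 < / x) by (apply Rinv_0_lt_compat; auto).
  change (Rabs (atan x - PI / 2) < eps).
  rewrite <- (Rinv_inv x), atan_inv by auto.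
  replace (PI / 2 - atan (/ x) - PI / 2) with (- (atan (/ x) - atan 0)) by (rewrite atan_0; ring).
  rewrite Rabs_Ropp. apply (Hd (/ x)).
  change (Rabs (/ x - 0) < d). rewrite Rminus_0_r, Rabs_pos_eq by lra.
  rewrite <- (Rinv_inv d). apply Rinv_lt_contravar; auto.
  apply Rmult_lt_0_compat; auto. apply Rinv_0_lt_compat; auto.
Qed.

Lemma filterlim_atan_m_infty : filterlim atan (Rbar_locally m_infty) (locally (- (PI / 2))).
Proof.
  apply filterlim_locally. intros eps.
  pose proof filterlim_atan_p_infty as H. apply filterlim_locally with (eps := eps) in H.
  destruct H as [M HM]. exists (- M). intros x Hx.
  specialize (HM (- x) ltac:(lra)). change (Rabs (atan (- x) - PI / 2) < eps) in HM.
  change (Rabs (atan x - - (PI / 2)) < eps).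
  rewrite atan_opp in HM. replace (atan x - - (PI / 2)) with (- (- atan x - PI / 2)) by ring.
  rewrite Rabs_Ropp; auto.
Qed.

(* On such ranges every continuous function dominated by a multiple of [lorentz] is
   integrable, by a Cauchy criterion on the values of [atan] at the ends. *)
Record atan_range (Fa Fb : (R -> Prop) -> Prop) : Prop := {
  atan_range_filter_l : ProperFilter Fa;
  atan_range_filter_r : ProperFilter Fb;
  atan_range_cvg_l : exists al, filterlim atan Fa (locally al);
  atan_range_cvg_r : exists be, filterlim atan Fb (locally be);
  atan_range_le : filter_prod Fa Fb (fun ab => fst ab <= snd ab) }.

Lemma atan_range_half_line : atan_range (at_point 0) (Rbar_locally p_infty).
Proof.
  split.
  - apply at_point_filter.
  - apply Rbar_locally_filter.
  - exists (atan 0). intros P HP. unfold filtermap, at_point. apply locally_singleton. auto.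
  - exists (PI / 2). apply filterlim_atan_p_infty.
  - exists (fun x => x = 0) (fun y => 0 < y).
    + reflexivity.
    + exists 0. auto.
    + intros x y -> Hy. simpl. lra.
Qed.

Lemma atan_range_line : atan_range (Rbar_locally m_infty) (Rbar_locally p_infty).
Proof.
  split.
  - apply Rbar_locally_filter.
  - apply Rbar_locally_filter.
  - exists (- (PI / 2)). apply filterlim_atan_m_infty.
  - exists (PI / 2). apply filterlim_atan_p_infty.
  - exists (fun x => x < 0) (fun y => 0 < y).
    + exists 0. auto.
    + exists 0. auto.
    + intros x y Hx Hy. simpl. lra.
Qed.

Lemma RInt_diff_le_atan (f : R -> R) C a b a' b' :
  (forall x, continuous f x) -> (forall x, Rabs (f x) <= C * lorentz x) ->
  Rabs (RInt f a' b' - RInt f a b) <= C * (Rabs (atan a - atan a') + Rabs (atan b' - atan b)).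
Proof.
  intros Hc Hb.
  assert (Hex : forall a b, ex_RInt f a b) by (intros; apply ex_RInt_continuous_R; auto).
  rewrite <- (RInt_Chasles f a' a b'), <- (RInt_Chasles f a b b') by auto.
  unfold plus; simpl.
  replace (RInt f a' a + (RInt f a b + RInt f b b') - RInt f a b)
    with (RInt f a' a + RInt f b b') by ring.
  eapply Rle_trans; [apply Rabs_triang|].
  pose proof (abs_RInt_le_lorentz f C a' a Hc Hb).
  pose proof (abs_RInt_le_lorentz f C b b' Hc Hb).
  lra.
Qed.

Lemma taylor1_remainder_le (f df ddf : R -> R) s0 h M :
  (forall s, Rabs (s - s0) <= Rabs h ->
     is_derive f s (df s) /\ is_derive df s (ddf s) /\ Rabs (ddf s) <= M) ->
  Rabs (f (s0 + h) - f s0 - h * df s0) <= M * h ^ 2.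
Proof.
  intros H.
  assert (HM : 0 <= M).
  { destruct (H s0) as [_ [_ Hm]].
    - rewrite Rminus_diag, Rabs_R0. apply Rabs_pos.
    - pose proof (Rabs_pos (ddf s0)). lra. }
  assert (Hdf : forall c, Rabs (c - s0) <= Rabs h -> Rabs (df c - df s0) <= M * Rabs h).
  { intros c Hc.
    destruct (MVT_cor4 df ddf s0 (Rabs h)) with (b := c) as [c' [Ec Hc']]; auto.
    - intros c0 Hc0. apply H; auto.
    - rewrite Ec, Rabs_mult. apply Rmult_le_compat; try apply Rabs_pos; auto. apply H. lra. }
  destruct (MVT_cor4 (fun s => f s - s * df s0) (fun s => df s - df s0) s0 (Rabs h))
    with (b := s0 + h) as [c [Ec Hc]].
  - intros c Hc. apply (is_derive_minus f (fun s => s * df s0)).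
    + apply H; auto.
    + auto_derive; auto. ring.
  - replace (s0 + h - s0) with h by ring. lra.
  - replace (f (s0 + h) - f s0 - h * df s0)
      with (f (s0 + h) - (s0 + h) * df s0 - (f s0 - s0 * df s0)) by ring.
    rewrite Ec. replace (s0 + h - s0) with h in * by ring.
    rewrite Rabs_mult.
    replace (M * h ^ 2) with ((M * Rabs h) * Rabs h)
      by (rewrite Rmult_assoc, <- Rabs_mult, Rabs_pos_eq by nra; ring).
    apply Rmult_le_compat_r; [apply Rabs_pos | apply Hdf; lra].
Qed.

Lemma is_derive_of_quadratic_remainder (g : R -> R) s0 L K dl : 0 < dl ->
  (forall h, Rabs h < dl -> Rabs (g (s0 + h) - g s0 - h * L) <= K * h ^ 2) ->
  is_derive g s0 L.
Proof.
  intros Hdl Hrem. apply is_derive_Reals. intros eps Heps.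
  set (K' := Rabs K + 1).
  assert (HK' : 0 < K') by (unfold K'; pose proof (Rabs_pos K); lra).
  assert (Hd : 0 < Rmin dl (eps / K')) by (apply Rmin_pos; [lra | apply Rdiv_lt_0_compat; lra]).
  exists (mkposreal _ Hd). intros h Hh0 Hh. simpl in Hh.
  pose proof (Rmin_l dl (eps / K')). pose proof (Rmin_r dl (eps / K')).
  assert (Hah : 0 < Rabs h) by (apply Rabs_pos_lt; auto).
  replace ((g (s0 + h) - g s0) / h - L) with ((g (s0 + h) - g s0 - h * L) / h) by (field; auto).
  unfold Rdiv. rewrite Rabs_mult, Rabs_inv.
  apply Rmult_lt_reg_r with (Rabs h); auto.
  rewrite Rmult_assoc, Rinv_l, Rmult_1_r by lra.
  eapply Rle_lt_trans; [apply Hrem; lra|].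
  assert (Rabs h * K' < eps).
  { apply Rmult_lt_reg_r with (/ K'); [apply Rinv_0_lt_compat; auto|].
    rewrite Rmult_assoc, Rinv_r, Rmult_1_r by lra. lra. }
  replace (h ^ 2) with (Rabs h * Rabs h) by (rewrite <- Rabs_mult, Rabs_pos_eq by nra; ring).
  pose proof (Rle_abs K). unfold K' in *. nra.
Qed.

Lemma Rabs_lt_Rmin_between s t a b :
  a < t < b -> Rabs (s - t) < Rmin (t - a) (b - t) -> a < s < b.
Proof.
  intros Ht Hs. pose proof (Rmin_l (t - a) (b - t)). pose proof (Rmin_r (t - a) (b - t)).
  destruct (Rabs_def2 _ _ Hs). lra.
Qed.

Lemma MVT_open_interval (f df : R -> R) a b t1 t2 :
  (forall t, a < t < b -> is_derive f t (df t)) -> a < t1 < b -> a < t2 < b ->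
  exists c, a < c < b /\ f t2 - f t1 = df c * (t2 - t1).
Proof.
  intros Hd Ht1 Ht2.
  pose proof (Rmin_glb_lt t1 t2 a ltac:(lra) ltac:(lra)).
  pose proof (Rmax_lub_lt t1 t2 b ltac:(lra) ltac:(lra)).
  destruct (MVT_gen f t1 t2 df) as [c [Hc E]].
  - intros x Hx. apply Hd. lra.
  - intros x Hx. apply continuity_pt_filterlim,
      (ex_derive_continuous (K := R_AbsRing) (V := R_NormedModule)).
    eexists. apply Hd. lra.
  - exists c. split; [lra | exact E].
Qed.

Lemma is_derive_nonpos_antitone (f df : R -> R) a b :
  (forall t, a < t < b -> is_derive f t (df t)) -> (forall t, a < t < b -> df t <= 0) ->
  forall t1 t2, a < t1 -> t1 <= t2 -> t2 < b -> f t2 <= f t1.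
Proof.
  intros Hd Hneg t1 t2 H1 H12 H2.
  destruct (MVT_open_interval f df a b t1 t2 Hd ltac:(lra) ltac:(lra)) as [c [Hc E]].
  pose proof (Hneg c Hc). nra.
Qed.

Lemma is_derive_0_const (f df : R -> R) a b :
  (forall t, a < t < b -> is_derive f t (df t)) -> (forall t, a < t < b -> df t = 0) ->
  forall t1 t2, a < t1 < b -> a < t2 < b -> f t1 = f t2.
Proof.
  intros Hd H0 t1 t2 H1 H2.
  destruct (MVT_open_interval f df a b t2 t1 Hd H2 H1) as [c [Hc E]].
  rewrite H0 in E by auto. lra.
Qed.

Section Dominated_integrals.

Variables Fa Fb : (R -> Prop) -> Prop.
Hypothesis Hrange : atan_range Fa Fb.

Lemma is_RInt_gen_dominated (f : R -> R) C :
  (forall x, continuous f x) -> (forall x, Rabs (f x) <= C * lorentz x) ->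
  is_RInt_gen f Fa Fb (RInt_gen f Fa Fb).
Proof.
  intros Hc Hb. destruct Hrange as [HFa HFb [al Hal] [be Hbe] _].
  pose proof (lorentz_bound_ge0 f C Hb) as HC.
  assert (Hlim : exists l, filterlim (fun ab : R * R => RInt f (fst ab) (snd ab))
                   (filter_prod Fa Fb) (locally l)).
  { apply filterlim_locally_cauchy. intros eps.
    assert (Hd : 0 < eps / (4 * (C + 1))) by (apply Rdiv_lt_0_compat; [apply cond_pos | lra]).
    set (d := mkposreal _ Hd).
    apply filterlim_locally with (eps := d) in Hal.
    apply filterlim_locally with (eps := d) in Hbe.
    exists (fun ab => ball al d (atan (fst ab)) /\ ball be d (atan (snd ab))). split.
    - exists (fun a => ball al d (atan a)) (fun b => ball be d (atan b)); auto.
    - intros [a b] [a' b'] [Ha Hb1] [Ha' Hb1']. simpl in *.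
      change (Rabs (atan a - al) < d) in Ha. change (Rabs (atan b - be) < d) in Hb1.
      change (Rabs (atan a' - al) < d) in Ha'. change (Rabs (atan b' - be) < d) in Hb1'.
      change (Rabs (RInt f a' b' - RInt f a b) < eps).
      eapply Rle_lt_trans; [apply (RInt_diff_le_atan f C); auto|].
      assert (Rabs (atan a - atan a') + Rabs (atan b' - atan b) < 4 * d).
      { pose proof (Rabs_triang (atan a - al) (- (atan a' - al))).
        pose proof (Rabs_triang (atan b' - be) (- (atan b - be))).
        rewrite Rabs_Ropp in *.
        replace (atan a - al + - (atan a' - al)) with (atan a - atan a') in * by ring.
        replace (atan b' - be + - (atan b - be)) with (atan b' - atan b) in * by ring.
        lra. }
      assert (C * (4 * d) < eps).
      { unfold d; simpl. pose proof (cond_pos eps).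
        replace (C * (4 * (eps / (4 * (C + 1))))) with (eps * (C / (C + 1))) by (field; lra).
        rewrite <- (Rmult_1_r eps) at 2. apply Rmult_lt_compat_l; auto.
        apply Rmult_lt_reg_r with (C + 1); [lra|].
        unfold Rdiv. rewrite Rmult_assoc, Rinv_l by lra. lra. }
      nra. }
  destruct Hlim as [l Hl].
  assert (Hi : is_RInt_gen f Fa Fb l).
  { apply (filterlimi_lim_ext (fun ab : R * R => RInt f (fst ab) (snd ab))); auto.
    intros [a b]. apply (RInt_correct (V := R_CompleteNormedModule)), ex_RInt_continuous_R; auto. }
  rewrite (is_RInt_gen_unique f l Hi). exact Hi.
Qed.

Lemma is_RInt_gen_lorentz : is_RInt_gen lorentz Fa Fb (RInt_gen lorentz Fa Fb).
Proof.
  apply (is_RInt_gen_dominated lorentz 1).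
  - apply continuous_lorentz.
  - intros x. rewrite Rmult_1_l, Rabs_pos_eq; [lra | left; apply lorentz_gt0].
Qed.

Lemma abs_RInt_gen_le_dominated (f : R -> R) C l :
  is_RInt_gen f Fa Fb l -> (forall x, Rabs (f x) <= C * lorentz x) ->
  Rabs l <= C * RInt_gen lorentz Fa Fb.
Proof.
  intros Hl Hb. destruct Hrange as [HFa HFb _ _ Hle].
  apply (RInt_gen_norm f (fun x => C * lorentz x) l _ Hle).
  - apply filter_forall. intros ab x _. apply Hb.
  - exact Hl.
  - apply (is_RInt_gen_scal lorentz C), is_RInt_gen_lorentz.
Qed.

Lemma is_RInt_gen_ge0 (f : R -> R) l :
  is_RInt_gen f Fa Fb l -> (forall x, 0 <= f x) -> 0 <= l.
Proof.
  intros Hl Hf. destruct Hrange as [HFa HFb _ _ Hle].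
  assert (H0 : is_RInt_gen (fun x => 0 * f x) Fa Fb (0 * l)) by exact (is_RInt_gen_scal f 0 l Hl).
  assert (Hn : norm (0 * l) <= l).
  { apply (RInt_gen_norm (fun x => 0 * f x) f (0 * l) l Hle); auto.
    apply filter_forall. intros ab x _.
    change (Rabs (0 * f x) <= f x). rewrite Rmult_0_l, Rabs_R0. auto. }
  change (Rabs (0 * l) <= l) in Hn. rewrite Rmult_0_l, Rabs_R0 in Hn. exact Hn.
Qed.

Lemma RInt_gen_lorentz_ge0 : 0 <= RInt_gen lorentz Fa Fb.
Proof.
  apply (is_RInt_gen_ge0 lorentz); [apply is_RInt_gen_lorentz | intros; left; apply lorentz_gt0].
Qed.

Lemma is_RInt_gen_lin_comb (f g h : R -> R) al be lf lg :
  is_RInt_gen f Fa Fb lf -> is_RInt_gen g Fa Fb lg ->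
  (forall x, h x = al * f x + be * g x) -> is_RInt_gen h Fa Fb (al * lf + be * lg).
Proof.
  intros Hf Hg Hh. destruct Hrange as [HFa HFb _ _ _].
  apply (is_RInt_gen_ext (fun x => plus (scal al (f x)) (scal be (g x)))).
  - apply filter_forall. intros ab x _. rewrite Hh. reflexivity.
  - apply (is_RInt_gen_plus (V := R_NormedModule));
      apply (is_RInt_gen_scal (V := R_NormedModule)); auto.
Qed.

Lemma is_RInt_gen_uniq (f : R -> R) l1 l2 :
  is_RInt_gen f Fa Fb l1 -> is_RInt_gen f Fa Fb l2 -> l1 = l2.
Proof.
  intros H1 H2. destruct Hrange as [HFa HFb _ _ _].
  rewrite <- (is_RInt_gen_unique f l1 H1). apply (is_RInt_gen_unique f l2 H2).
Qed.

Lemma is_derive_RInt_gen_param (F dF ddF : R -> R -> R) s0 dl C : 0 < dl ->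
  (forall s x, Rabs (s - s0) < dl ->
     is_derive (fun s => F s x) s (dF s x) /\ is_derive (fun s => dF s x) s (ddF s x)) ->
  (forall s x, Rabs (s - s0) < dl ->
     Rabs (F s x) <= C * lorentz x /\ Rabs (dF s x) <= C * lorentz x /\
     Rabs (ddF s x) <= C * lorentz x) ->
  (forall s x, Rabs (s - s0) < dl -> continuous (F s) x /\ continuous (dF s) x) ->
  is_derive (fun s => RInt_gen (F s) Fa Fb) s0 (RInt_gen (dF s0) Fa Fb).
Proof.
  intros Hdl HD HB HC. pose proof Hrange as [HFa HFb _ _ _].
  assert (Hint : forall (G : R -> R -> R) s, Rabs (s - s0) < dl ->
    (forall s x, Rabs (s - s0) < dl -> continuous (G s) x /\ Rabs (G s x) <= C * lorentz x) ->
    is_RInt_gen (G s) Fa Fb (RInt_gen (G s) Fa Fb)).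
  { intros G s Hs HG. apply (is_RInt_gen_dominated _ C); intros; apply HG; auto. }
  assert (Hs0 : Rabs (s0 - s0) < dl) by (rewrite Rminus_diag, Rabs_R0; auto).
  apply (is_derive_of_quadratic_remainder _ s0 _ (C * RInt_gen lorentz Fa Fb) (dl / 2)); [lra|].
  intros h Hh.
  assert (Hsh : Rabs (s0 + h - s0) < dl) by (replace (s0 + h - s0) with h by ring; lra).
  set (I1 := RInt_gen (F (s0 + h)) Fa Fb). set (I0 := RInt_gen (F s0) Fa Fb).
  set (J := RInt_gen (dF s0) Fa Fb).
  assert (Hrem : is_RInt_gen (fun x => F (s0 + h) x - F s0 x - h * dF s0 x) Fa Fb
                   (1 * (1 * I1 + -1 * I0) + - h * J)).
  { apply (is_RInt_gen_lin_comb (fun x => F (s0 + h) x - F s0 x) (fun x => dF s0 x)).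
    - apply (is_RInt_gen_lin_comb (F (s0 + h)) (F s0)).
      + apply (Hint F); auto. intros; split; [apply HC | apply HB]; auto.
      + apply (Hint F); auto. intros; split; [apply HC | apply HB]; auto.
      + intros x. ring.
    - apply (Hint dF); auto. intros; split; [apply HC | apply HB]; auto.
    - intros x. ring. }
  replace (I1 - I0 - h * J) with (1 * (1 * I1 + -1 * I0) + - h * J) by ring.
  replace (C * RInt_gen lorentz Fa Fb * h ^ 2) with (C * h ^ 2 * RInt_gen lorentz Fa Fb) by ring.
  apply (abs_RInt_gen_le_dominated _ _ _ Hrem).
  intros x. replace (C * h ^ 2 * lorentz x) with (C * lorentz x * h ^ 2) by ring.
  apply (taylor1_remainder_le (fun s => F s x) (fun s => dF s x) (fun s => ddF s x)).
  intros s Hs. assert (Hs' : Rabs (s - s0) < dl) by lra.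
  destruct (HD s x Hs'). split; [|split]; auto. apply HB; auto.
Qed.

End Dominated_integrals.

Lemma eq_of_dist_le_all x y : (forall eta, 0 < eta -> Rabs (x - y) <= eta) -> x = y.
Proof.
  intros H. apply Rminus_diag_uniq. destruct (Req_dec (x - y) 0) as [E|E]; auto.
  pose proof (Rabs_pos_lt _ E). specialize (H (Rabs (x - y) / 2)). lra.
Qed.

(* [A] need not be differentiable at [0]: continuity there suffices, since [h] is bounded. *)
Lemma RInt_from_0_derive (A h : R -> R) M b : 0 < b ->
  (forall r, 0 < r -> is_derive A r (h r)) -> (forall r, continuous h r) ->
  (forall r, Rabs (h r) <= M) -> continuous A 0 ->
  RInt h 0 b = A b - A 0.
Proof.
  intros Hb HD Hc HM HA0.
  assert (Hex : forall x y, ex_RInt h x y) by (intros; apply ex_RInt_continuous_R; auto).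
  apply eq_of_dist_le_all. intros eta Heta.
  assert (He2 : 0 < eta / 2) by lra.
  apply filterlim_locally with (eps := mkposreal _ He2) in HA0. destruct HA0 as [dl Hdl].
  assert (Hdl0 : 0 < dl) by apply cond_pos.
  assert (HMp : 0 < Rabs M + 1) by (pose proof (Rabs_pos M); lra).
  set (eps := Rmin (Rmin (dl / 2) (b / 2)) (eta / (2 * (Rabs M + 1)))).
  assert (Heps : 0 < eps).
  { unfold eps. repeat apply Rmin_pos; try lra. apply Rdiv_lt_0_compat; lra. }
  assert (He1 : eps <= dl / 2) by (unfold eps; eapply Rle_trans; [apply Rmin_l | apply Rmin_l]).
  assert (He2' : eps <= b / 2) by (unfold eps; eapply Rle_trans; [apply Rmin_l | apply Rmin_r]).
  assert (He3 : eps <= eta / (2 * (Rabs M + 1))) by (unfold eps; apply Rmin_r).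
  assert (Htail : RInt h eps b = A b - A eps).
  { apply is_RInt_unique, (is_RInt_derive (V := R_CompleteNormedModule) A h).
    - intros x Hx. rewrite Rmin_left, Rmax_right in Hx by lra. apply HD. lra.
    - intros x _. apply Hc. }
  assert (Hhead : Rabs (RInt h 0 eps) <= eps * Rabs M).
  { rewrite <- (Rminus_0_r eps) at 2. apply abs_RInt_le_const; auto; [lra|].
    intros t _. eapply Rle_trans; [apply HM | apply Rle_abs]. }
  assert (HAeps : Rabs (A eps - A 0) < eta / 2).
  { apply (Hdl eps). change (Rabs (eps - 0) < dl). rewrite Rminus_0_r, Rabs_pos_eq; lra. }
  assert (HepsM : eps * Rabs M <= eta / 2).
  { apply Rle_trans with (eta / (2 * (Rabs M + 1)) * Rabs M).
    - apply Rmult_le_compat_r; auto. apply Rabs_pos.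
    - apply Rmult_le_reg_r with (2 * (Rabs M + 1)); [lra|].
      replace (eta / (2 * (Rabs M + 1)) * Rabs M * (2 * (Rabs M + 1))) with (eta * Rabs M)
        by (field; lra).
      pose proof (Rabs_pos M). nra. }
  rewrite <- (RInt_Chasles h 0 eps b) by auto. unfold plus; simpl. rewrite Htail.
  replace (RInt h 0 eps + (A b - A eps) - (A b - A 0)) with (RInt h 0 eps - (A eps - A 0)) by ring.
  eapply Rle_trans; [apply Rabs_triang|]. rewrite Rabs_Ropp. lra.
Qed.

Lemma is_RInt_gen_half_line_derive (A h : R -> R) M L :
  (forall r, 0 < r -> is_derive A r (h r)) -> (forall r, continuous h r) ->
  (forall r, Rabs (h r) <= M) -> continuous A 0 ->
  filterlim A (Rbar_locally p_infty) (locally L) ->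
  is_RInt_gen h (at_point 0) (Rbar_locally p_infty) (L - A 0).
Proof.
  intros HD Hc HM HA0 Hinf.
  apply (filterlimi_lim_ext_loc (fun ab : R * R => A (snd ab) - A (fst ab))).
  - exists (fun x => x = 0) (fun y => 0 < y).
    + reflexivity.
    + exists 0. auto.
    + intros x y -> Hy. simpl. rewrite <- (RInt_from_0_derive A h M y) by auto.
      apply (RInt_correct (V := R_CompleteNormedModule)), ex_RInt_continuous_R; auto.
  - apply filterlim_locally. intros eps.
    apply filterlim_locally with (eps := eps) in Hinf.
    exists (fun x => x = 0) (fun y => ball L eps (A y)).
    + reflexivity.
    + exact Hinf.
    + intros x y -> Hy. simpl. change (Rabs (A y - A 0 - (L - A 0)) < eps).
      replace (A y - A 0 - (L - A 0)) with (A y - L) by ring. exact Hy.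
Qed.

Lemma lorentz_dominated_vanish (f : R -> R) C : (forall z, Rabs (f z) <= C * lorentz z) ->
  filterlim f (Rbar_locally p_infty) (locally 0) /\ filterlim f (Rbar_locally m_infty) (locally 0).
Proof.
  intros H. pose proof (lorentz_bound_ge0 f C H) as HC.
  assert (Hfar : forall eps : posreal, forall z, C / eps < Rabs z -> Rabs (f z - 0) < eps).
  { intros eps z Hz. pose proof (cond_pos eps). rewrite Rminus_0_r.
    assert (0 <= C / eps) by (apply Rdiv_le_0_compat; lra).
    assert (Hz0 : 0 < Rabs z) by lra.
    eapply Rle_lt_trans; [apply H|]. unfold lorentz.
    assert (Rabs z <= 1 + z ^ 2).
    { destruct (Rle_or_lt 0 z); [rewrite Rabs_pos_eq | rewrite Rabs_left]; nra. }
    apply Rle_lt_trans with (C / Rabs z).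
    - unfold Rdiv. apply Rmult_le_compat_l; auto. apply Rinv_le_contravar; auto.
    - apply Rmult_lt_reg_r with (Rabs z / eps); [apply Rdiv_lt_0_compat; lra|].
      replace (C / Rabs z * (Rabs z / eps)) with (C / eps) by (field; lra).
      replace (eps * (Rabs z / eps)) with (Rabs z) by (field; lra). lra. }
  split; apply filterlim_locally; intros eps;
    assert (0 <= C / eps) by (apply Rdiv_le_0_compat; auto; apply cond_pos).
  - exists (C / eps). intros z Hz. apply Hfar. rewrite Rabs_pos_eq; lra.
  - exists (- (C / eps)). intros z Hz. apply Hfar. rewrite Rabs_left; lra.
Qed.

(* [Rpower r n] is junk for [r <= 0]; the weight is extended by [0] there, which makes it
   continuous at [0] when [n > 0]. *)
Definition radial_weight (n r : R) : R := if Rlt_dec 0 r then Rpower r n else 0.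

Lemma radial_weight_pos n r : 0 < r -> radial_weight n r = Rpower r n.
Proof. intros H. unfold radial_weight. destruct (Rlt_dec 0 r); auto; lra. Qed.

Lemma radial_weight_nonpos n r : r <= 0 -> radial_weight n r = 0.
Proof. intros H. unfold radial_weight. destruct (Rlt_dec 0 r); auto; lra. Qed.

Lemma radial_weight_ge0 n r : 0 <= radial_weight n r.
Proof. unfold radial_weight. destruct (Rlt_dec 0 r); [left; apply exp_pos | lra]. Qed.

Lemma Rpower_le_1 r m : 0 < r <= 1 -> 0 <= m -> Rpower r m <= 1.
Proof.
  intros Hr Hm. unfold Rpower. rewrite <- exp_0.
  assert (ln r <= 0) by (rewrite <- ln_1; apply ln_le; lra).
  destruct (Req_dec (m * ln r) 0) as [E|E]; [rewrite E; lra|].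
  left. apply exp_increasing. nra.
Qed.

Lemma radial_weight_le n r : 0 <= n <= 7 -> radial_weight n r <= (1 + r ^ 2) ^ 4.
Proof.
  intros Hn. unfold radial_weight. destruct (Rlt_dec 0 r) as [Hr|Hr].
  - destruct (Rle_or_lt r 1).
    + eapply Rle_trans; [apply Rpower_le_1; lra|]. apply pow_R1_Rle. nra.
    + eapply Rle_trans; [apply (Rle_Rpower r n 7); lra|].
      replace 7 with (INR 7) by (simpl; ring). rewrite Rpower_pow by lra.
      pose proof (pow_lt r 7 Hr).
      apply Rle_trans with ((r ^ 2) ^ 4); [simpl; nra|]. apply pow_incr. nra.
  - apply pow_le. nra.
Qed.

Lemma radial_weight_le_id n r : 1 <= n -> 0 < r <= 1 -> radial_weight n r <= r.
Proof.
  intros Hn Hr. rewrite radial_weight_pos by lra.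
  replace n with (1 + (n - 1)) by ring. rewrite Rpower_plus, Rpower_1 by lra.
  pose proof (Rpower_le_1 r (n - 1) Hr ltac:(lra)).
  assert (0 < Rpower r (n - 1)) by apply exp_pos. nra.
Qed.

Lemma is_derive_radial_weight n r : 0 < r ->
  is_derive (radial_weight n) r (n / r * radial_weight n r).
Proof.
  intros Hr. apply (is_derive_ext_loc (fun s => Rpower s n)).
  - exists (mkposreal _ Hr). intros y Hy. change (Rabs (y - r) < r) in Hy.
    rewrite radial_weight_pos; auto. destruct (Rabs_def2 _ _ Hy). lra.
  - rewrite radial_weight_pos by auto. apply is_derive_Reals.
    replace (n / r * Rpower r n) with (n * Rpower r (n - 1)).
    + apply derivable_pt_lim_power; auto.
    + replace (Rpower r n) with (Rpower r ((n - 1) + 1)) by (f_equal; ring).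
      rewrite Rpower_plus, Rpower_1 by auto. field. lra.
Qed.

Lemma continuous_radial_weight n r : 1 <= n -> continuous (radial_weight n) r.
Proof.
  intros Hn. destruct (Rtotal_order r 0) as [Hr | [-> | Hr]].
  - apply (continuous_ext_loc _ (fun _ => 0)); [|apply continuous_const].
    assert (Hr' : 0 < - r) by lra.
    exists (mkposreal _ Hr'). intros y Hy. change (Rabs (y - r) < - r) in Hy.
    rewrite radial_weight_nonpos; auto. destruct (Rabs_def2 _ _ Hy). lra.
  - apply filterlim_locally. intros eps.
    assert (He : 0 < Rmin 1 eps) by (apply Rmin_pos; [lra | apply cond_pos]).
    exists (mkposreal _ He). intros y Hy. change (Rabs (y - 0) < Rmin 1 eps) in Hy.
    change (Rabs (radial_weight n y - radial_weight n 0) < eps).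
    rewrite (radial_weight_nonpos n 0), !Rminus_0_r in * by lra.
    pose proof (Rmin_l 1 eps). pose proof (Rmin_r 1 eps).
    destruct (Rle_or_lt y 0).
    + rewrite radial_weight_nonpos, Rabs_R0 by auto. apply cond_pos.
    + rewrite Rabs_pos_eq in * by (apply radial_weight_ge0 || lra).
      pose proof (radial_weight_le_id n y Hn ltac:(lra)). lra.
  - apply (ex_derive_continuous (K := R_AbsRing) (V := R_NormedModule)).
    eexists. apply is_derive_radial_weight; auto.
Qed.

(** * Differential polynomials in the fields *)

Definition is_partial (d : dir) (f : fn3) (t r z v : R) : Prop :=
  match d with
  | dirT => is_derive (fun s => f s r z) t v
  | dirR => is_derive (fun s => f t s z) r v
  | dirZ => is_derive (fun s => f t r s) z v
  end.

Lemma is_partial_Dop d f t r z : ex_partial d f t r z -> is_partial d f t r z (Dop d f t r z).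
Proof. destruct d; intros H; apply Derive_correct; auto. Qed.

Lemma is_derive_Rconst (c x : R) : is_derive (fun _ => c) x 0.
Proof. apply is_derive_Reals, derivable_pt_lim_const. Qed.

Lemma is_derive_Rplus (f g : R -> R) x a b : is_derive f x a -> is_derive g x b ->
  is_derive (fun s => f s + g s) x (a + b).
Proof. intros Hf Hg. exact (is_derive_plus f g x a b Hf Hg). Qed.

Lemma is_derive_Rmult (f g : R -> R) x a b : is_derive f x a -> is_derive g x b ->
  is_derive (fun s => f s * g s) x (a * g x + f x * b).
Proof. intros Hf Hg. exact (is_derive_mult f g x a b Hf Hg Rmult_comm). Qed.

Lemma is_derive_Rmult_const_r (f : R -> R) x a c : is_derive f x a ->
  is_derive (fun s => f s * c) x (a * c).
Proof.
  intros Hf. replace (a * c) with (a * c + f x * 0) by ring.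
  apply is_derive_Rmult; auto. apply is_derive_Rconst.
Qed.

(* Polynomials in [r] and in the partial derivatives [Dmulti l (B i)] of a family of fields:
   the integrands of the energy argument, closed under formal partial differentiation. *)
Inductive dpoly :=
  | DField (i : nat) (l : list dir)
  | DConst (c : R)
  | DRadius
  | DAdd (p q : dpoly)
  | DMul (p q : dpoly).

Fixpoint eval_dpoly (B : nat -> fn3) (p : dpoly) : fn3 :=
  match p with
  | DField i l => Dmulti l (B i)
  | DConst c => fun _ _ _ => c
  | DRadius => fun _ r _ => r
  | DAdd p q => fun t r z => eval_dpoly B p t r z + eval_dpoly B q t r z
  | DMul p q => fun t r z => eval_dpoly B p t r z * eval_dpoly B q t r z
  end.

Fixpoint dpoly_deriv (d : dir) (p : dpoly) : dpoly :=
  match p with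
  | DField i l => DField i (d :: l)
  | DConst _ => DConst 0
  | DRadius => match d with dirR => DConst 1 | _ => DConst 0 end
  | DAdd p q => DAdd (dpoly_deriv d p) (dpoly_deriv d q)
  | DMul p q => DAdd (DMul (dpoly_deriv d p) q) (DMul p (dpoly_deriv d q))
  end.

Definition DScale (c : R) (p : dpoly) : dpoly := DMul (DConst c) p.

(* Every monomial has a factor [Dmulti l (B i)], whose rapid decay it inherits. *)
Fixpoint decaying (p : dpoly) : Prop :=
  match p with
  | DField _ _ => True
  | DConst _ | DRadius => False
  | DAdd p q => decaying p /\ decaying q
  | DMul p q => decaying p \/ decaying q
  end.

Lemma decaying_deriv d p : decaying p -> decaying (dpoly_deriv d p).
Proof. induction p; simpl; tauto. Qed.

Definition bracket (r z : R) : R := 1 + r ^ 2 + z ^ 2.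

Lemma bracket_ge1 r z : 1 <= bracket r z.
Proof. unfold bracket. nra. Qed.

Lemma bracket_pow_gt0 r z k : 0 < bracket r z ^ k.
Proof. apply pow_lt. pose proof (bracket_ge1 r z). lra. Qed.

Lemma bracket_pow_le r z k1 k2 : (k1 <= k2)%nat -> bracket r z ^ k1 <= bracket r z ^ k2.
Proof. intros. apply Rle_pow; auto. apply bracket_ge1. Qed.

Definition poly_bounded_on (a b : R) (f : fn3) : Prop :=
  exists C k, 0 <= C /\ forall t r z, a <= t <= b -> Rabs (f t r z) <= C * bracket r z ^ k.

Definition decays_on (a b : R) (f : fn3) : Prop :=
  forall k, exists C, 0 <= C /\
    forall t r z, a <= t <= b -> Rabs (f t r z) * bracket r z ^ k <= C.

Lemma poly_bounded_on_add a b (f g : fn3) : poly_bounded_on a b f -> poly_bounded_on a b g ->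
  poly_bounded_on a b (fun t r z => f t r z + g t r z).
Proof.
  intros [C1 [k1 [H1 HC1]]] [C2 [k2 [H2 HC2]]].
  exists (C1 + C2), (k1 + k2)%nat. split; [lra|]. intros t r z Ht.
  eapply Rle_trans; [apply Rabs_triang|].
  pose proof (HC1 t r z Ht). pose proof (HC2 t r z Ht).
  pose proof (bracket_pow_le r z k1 (k1 + k2) ltac:(lia)).
  pose proof (bracket_pow_le r z k2 (k1 + k2) ltac:(lia)).
  nra.
Qed.

Lemma poly_bounded_on_mul a b (f g : fn3) : poly_bounded_on a b f -> poly_bounded_on a b g ->
  poly_bounded_on a b (fun t r z => f t r z * g t r z).
Proof.
  intros [C1 [k1 [H1 HC1]]] [C2 [k2 [H2 HC2]]].
  exists (C1 * C2), (k1 + k2)%nat. split; [nra|]. intros t r z Ht.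
  rewrite Rabs_mult, pow_add.
  replace (C1 * C2 * (bracket r z ^ k1 * bracket r z ^ k2))
    with ((C1 * bracket r z ^ k1) * (C2 * bracket r z ^ k2)) by ring.
  apply Rmult_le_compat; auto; apply Rabs_pos.
Qed.

Lemma decays_on_add a b (f g : fn3) : decays_on a b f -> decays_on a b g ->
  decays_on a b (fun t r z => f t r z + g t r z).
Proof.
  intros Hf Hg k. destruct (Hf k) as [C1 [P1 HC1]]. destruct (Hg k) as [C2 [P2 HC2]].
  exists (C1 + C2). split; [lra|]. intros t r z Ht.
  pose proof (HC1 t r z Ht). pose proof (HC2 t r z Ht). pose proof (bracket_pow_gt0 r z k).
  pose proof (Rabs_triang (f t r z) (g t r z)). nra.
Qed.

Lemma decays_on_mul a b (f g : fn3) : decays_on a b f -> poly_bounded_on a b g ->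
  decays_on a b (fun t r z => f t r z * g t r z).
Proof.
  intros Hf [C2 [k2 [P2 HC2]]] k. destruct (Hf (k + k2)%nat) as [C1 [P1 HC1]].
  exists (C1 * C2). split; [nra|]. intros t r z Ht.
  pose proof (HC1 t r z Ht) as H1. pose proof (HC2 t r z Ht).
  rewrite pow_add in H1. rewrite Rabs_mult.
  pose proof (bracket_pow_gt0 r z k). pose proof (bracket_pow_gt0 r z k2).
  pose proof (Rabs_pos (f t r z)). pose proof (Rabs_pos (g t r z)).
  apply Rle_trans with ((Rabs (f t r z) * bracket r z ^ k) * (C2 * bracket r z ^ k2)).
  - replace (Rabs (f t r z) * Rabs (g t r z) * bracket r z ^ k)
      with ((Rabs (f t r z) * bracket r z ^ k) * Rabs (g t r z)) by ring.
    apply Rmult_le_compat_l; nra.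
  - nra.
Qed.

Lemma cont3_ball f t r z : cont3 f t r z ->
  forall eps, 0 < eps -> exists dl, 0 < dl /\ forall t' r' z',
    Rabs (t' - t) < dl -> Rabs (r' - r) < dl -> Rabs (z' - z) < dl ->
    Rabs (f t' r' z' - f t r z) < eps.
Proof.
  intros H eps He. apply filterlim_locally with (eps := mkposreal _ He) in H.
  destruct H as [dl Hdl]. exists dl. split; [apply cond_pos|].
  intros t' r' z' H1 H2 H3. apply (Hdl ((t', r'), z')). split; [split|]; simpl; auto.
Qed.

Lemma cont3_continuous_r f t r z : cont3 f t r z -> continuous (fun s => f t s z) r.
Proof.
  intros H. apply filterlim_locally. intros eps.
  destruct (cont3_ball f t r z H eps (cond_pos eps)) as [dl [Hdl Hd]].
  exists (mkposreal _ Hdl). intros y Hy. apply Hd; auto; rewrite Rminus_diag, Rabs_R0; auto.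
Qed.

(** * Weighted integrals over the half plane *)

Definition inner_int (B : nat -> fn3) (n : R) (p : dpoly) (t z : R) : R :=
  RInt_gen (fun r => eval_dpoly B p t r z * radial_weight n r) (at_point 0) (Rbar_locally p_infty).

Definition plane_int (B : nat -> fn3) (n : R) (p : dpoly) (t : R) : R :=
  RInt_gen (fun z => inner_int B n p t z) (Rbar_locally m_infty) (Rbar_locally p_infty).

Section Weighted_integrals.

Variables (B : nat -> fn3) (T a b n : R).
Hypothesis B_smooth : forall i, smooth_slab T (B i).
Hypothesis B_decay : forall i, rapid_decay T (B i).
Hypotheses (a_gt0 : 0 < a) (a_le_b : a <= b) (b_lt_T : b < T).
Hypothesis n_range : 1 <= n <= 7.

Lemma is_partial_eval_dpoly p d t r z : 0 < t < T ->
  is_partial d (eval_dpoly B p) t r z (eval_dpoly B (dpoly_deriv d p) t r z).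
Proof.
  intros Ht. induction p; simpl.
  - apply is_partial_Dop, B_smooth; auto.
  - destruct d; simpl; apply is_derive_Rconst.
  - destruct d; simpl;
      [apply is_derive_Rconst | apply (is_derive_id (K := R_AbsRing)) | apply is_derive_Rconst].
  - destruct d; simpl in *; exact (is_derive_Rplus _ _ _ _ _ IHp1 IHp2).
  - destruct d; simpl in *; exact (is_derive_Rmult _ _ _ _ _ IHp1 IHp2).
Qed.

Lemma cont3_eval_dpoly p t r z : 0 < t < T -> cont3 (eval_dpoly B p) t r z.
Proof.
  intros Ht. unfold cont3. induction p; simpl.
  - apply B_smooth; auto.
  - apply continuous_const.
  - apply (continuous_comp (fun p : R * R * R => fst p) snd).
    + apply continuous_fst.
    + apply continuous_snd.
  - apply (continuous_plus (K := R_AbsRing) (V := R_NormedModule)); auto.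
  - apply (continuous_mult (K := R_AbsRing)); auto.
Qed.

Lemma continuous_weighted_r p t z r : 0 < t < T ->
  continuous (fun s => eval_dpoly B p t s z * radial_weight n s) r.
Proof.
  intros Ht. apply (continuous_mult (K := R_AbsRing) (fun s => eval_dpoly B p t s z)).
  - apply cont3_continuous_r, cont3_eval_dpoly; auto.
  - apply continuous_radial_weight. lra.
Qed.

Lemma eval_dpoly_growth p : poly_bounded_on a b (eval_dpoly B p).
Proof.
  induction p as [i l | c | | p IHp q IHq | p IHp q IHq]; simpl.
  - destruct (B_decay i l 0%nat a b a_gt0 a_le_b b_lt_T) as [C HC].
    exists C, 0%nat. split.
    + specialize (HC a 0 0 ltac:(lra)). pose proof (Rabs_pos (Dmulti l (B i) a 0 0)).
      simpl in HC. lra.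
    + intros t r z Ht. specialize (HC t r z Ht). simpl in *. lra.
  - exists (Rabs c), 0%nat. split; [apply Rabs_pos|]. intros; simpl; lra.
  - exists 1, 1%nat. split; [lra|]. intros t r z _. unfold bracket. simpl.
    apply Rabs_le. nra.
  - apply poly_bounded_on_add; auto.
  - apply poly_bounded_on_mul; auto.
Qed.

Lemma eval_dpoly_decay p : decaying p -> decays_on a b (eval_dpoly B p).
Proof.
  induction p as [i l | c | | p IHp q IHq | p IHp q IHq]; simpl; intros Hp; try tauto.
  - intros k. destruct (B_decay i l k a b a_gt0 a_le_b b_lt_T) as [C HC]. exists C. split.
    + specialize (HC a 0 0 ltac:(lra)). pose proof (Rabs_pos (Dmulti l (B i) a 0 0)).
      pose proof (bracket_pow_gt0 0 0 k). unfold bracket in *. nra.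
    + intros t r z Ht. rewrite Rmult_comm. exact (HC t r z Ht).
  - apply decays_on_add; tauto.
  - destruct Hp as [Hp | Hq].
    + apply decays_on_mul; auto. apply eval_dpoly_growth.
    + intros k. destruct (decays_on_mul _ _ _ _ (IHq Hq) (eval_dpoly_growth p) k) as [C [HC0 HC]].
      exists C. split; auto. intros t r z Ht.
      rewrite (Rmult_comm (eval_dpoly B p t r z)). auto.
Qed.

(* The exponent [6]: [r^n <= (1 + r^2)^4] for [n <= 7], and
   [(1 + r^2)(1 + z^2) <= bracket r z ^ 2]. *)
Lemma weighted_le_lorentz p : decaying p ->
  exists C, 0 <= C /\ forall t r z, a <= t <= b ->
    Rabs (eval_dpoly B p t r z * radial_weight n r) <= C * lorentz r * lorentz z.
Proof.
  intros Hp. destruct (eval_dpoly_decay p Hp 6%nat) as [C [HC0 HC]].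
  exists C. split; auto. intros t r z Ht. specialize (HC t r z Ht).
  set (Y := 1 + r ^ 2). set (Z := 1 + z ^ 2).
  assert (HY : 1 <= Y) by (unfold Y; nra). assert (HZ : 1 <= Z) by (unfold Z; nra).
  assert (HYX : Y <= bracket r z) by (unfold Y, bracket; nra).
  assert (HZX : Z <= bracket r z) by (unfold Z, bracket; nra).
  pose proof (radial_weight_le n r ltac:(lra)) as Hw. fold Y in Hw.
  pose proof (radial_weight_ge0 n r) as Hw0.
  assert (H6 : radial_weight n r * Y * Z <= bracket r z ^ 6).
  { assert (Y ^ 5 <= bracket r z ^ 5) by (apply pow_incr; lra).
    assert (radial_weight n r * Y <= Y ^ 5) by (replace (Y ^ 5) with (Y ^ 4 * Y) by ring; nra).
    pose proof (bracket_pow_gt0 r z 5).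
    replace (bracket r z ^ 6) with (bracket r z ^ 5 * bracket r z) by ring.
    apply Rle_trans with (Y ^ 5 * Z).
    - nra.
    - apply Rmult_le_compat; try lra. apply pow_le. lra. }
  rewrite Rabs_mult, (Rabs_pos_eq (radial_weight n r)) by auto.
  unfold lorentz. fold Y Z.
  pose proof (Rabs_pos (eval_dpoly B p t r z)).
  apply Rmult_le_reg_r with (Y * Z); [nra|].
  replace (C * / Y * / Z * (Y * Z)) with C by (field; lra).
  eapply Rle_trans; [|apply HC].
  replace (Rabs (eval_dpoly B p t r z) * radial_weight n r * (Y * Z))
    with (Rabs (eval_dpoly B p t r z) * (radial_weight n r * Y * Z)) by ring.
  apply Rmult_le_compat_l; auto.
Qed.

Lemma is_RInt_gen_inner p t z : decaying p -> a <= t <= b ->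
  is_RInt_gen (fun r => eval_dpoly B p t r z * radial_weight n r)
    (at_point 0) (Rbar_locally p_infty) (inner_int B n p t z).
Proof.
  intros Hp Ht. destruct (weighted_le_lorentz p Hp) as [C [HC0 HC]].
  apply (is_RInt_gen_dominated _ _ atan_range_half_line _ (C * lorentz z)).
  - intros r. apply continuous_weighted_r. lra.
  - intros r. replace (C * lorentz z * lorentz r) with (C * lorentz r * lorentz z) by ring. auto.
Qed.

Lemma inner_int_le_lorentz p : decaying p ->
  exists C, 0 <= C /\ forall t z, a <= t <= b -> Rabs (inner_int B n p t z) <= C * lorentz z.
Proof.
  intros Hp. destruct (weighted_le_lorentz p Hp) as [C [HC0 HC]].
  set (L := RInt_gen lorentz (at_point 0) (Rbar_locally p_infty)).
  exists (C * L). split.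
  - apply Rmult_le_pos; auto. apply (RInt_gen_lorentz_ge0 _ _ atan_range_half_line).
  - intros t z Ht. replace (C * L * lorentz z) with (C * lorentz z * L) by ring.
    apply (abs_RInt_gen_le_dominated _ _ atan_range_half_line _ _ _
             (is_RInt_gen_inner p t z Hp Ht)).
    intros r. replace (C * lorentz z * lorentz r) with (C * lorentz r * lorentz z) by ring. auto.
Qed.

Lemma weighted_deriv2_le_lorentz d p : decaying p ->
  exists C, 0 <= C /\ forall t r z, a <= t <= b ->
    Rabs (eval_dpoly B p t r z * radial_weight n r) <= C * lorentz r * lorentz z /\
    Rabs (eval_dpoly B (dpoly_deriv d p) t r z * radial_weight n r) <= C * lorentz r * lorentz z /\
    Rabs (eval_dpoly B (dpoly_deriv d (dpoly_deriv d p)) t r z * radial_weight n r)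
      <= C * lorentz r * lorentz z.
Proof.
  intros Hp. pose proof (decaying_deriv d p Hp) as Hp'.
  destruct (weighted_le_lorentz p Hp) as [C1 [P1 H1]].
  destruct (weighted_le_lorentz _ Hp') as [C2 [P2 H2]].
  destruct (weighted_le_lorentz _ (decaying_deriv d _ Hp')) as [C3 [P3 H3]].
  exists (C1 + C2 + C3). split; [lra|]. intros t r z Ht.
  pose proof (lorentz_gt0 r). pose proof (lorentz_gt0 z).
  assert (Hm : forall C', 0 <= C' -> C' <= C1 + C2 + C3 ->
     C' * lorentz r * lorentz z <= (C1 + C2 + C3) * lorentz r * lorentz z).
  { intros. apply Rmult_le_compat_r; [lra|]. apply Rmult_le_compat_r; lra. }
  split; [|split]; (eapply Rle_trans; [apply H1 || apply H2 || apply H3; auto | apply Hm; lra]).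
Qed.

Lemma is_derive_inner_t p t z : decaying p -> a < t < b ->
  is_derive (fun s => inner_int B n p s z) t (inner_int B n (dpoly_deriv dirT p) t z).
Proof.
  intros Hp Ht. destruct (weighted_deriv2_le_lorentz dirT p Hp) as [C [HC0 HC]].
  assert (Hdl : 0 < Rmin (t - a) (b - t)) by (apply Rmin_pos; lra).
  apply (is_derive_RInt_gen_param _ _ atan_range_half_line
     (fun s r => eval_dpoly B p s r z * radial_weight n r)
     (fun s r => eval_dpoly B (dpoly_deriv dirT p) s r z * radial_weight n r)
     (fun s r => eval_dpoly B (dpoly_deriv dirT (dpoly_deriv dirT p)) s r z * radial_weight n r)
     t _ C Hdl); intros s r Hs; pose proof (Rabs_lt_Rmin_between s t a b Ht Hs).
  - split; apply is_derive_Rmult_const_r, (is_partial_eval_dpoly _ dirT); lra.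
  - destruct (HC s r z ltac:(lra)) as [H1 [H2 H3]].
    assert (C * lorentz r * lorentz z <= C * lorentz r) by (apply scale_lorentz_le; auto).
    repeat split; lra.
  - split; apply continuous_weighted_r; lra.
Qed.

Lemma is_derive_inner_z p t z : decaying p -> a <= t <= b ->
  is_derive (fun s => inner_int B n p t s) z (inner_int B n (dpoly_deriv dirZ p) t z).
Proof.
  intros Hp Ht. destruct (weighted_deriv2_le_lorentz dirZ p Hp) as [C [HC0 HC]].
  apply (is_derive_RInt_gen_param _ _ atan_range_half_line
     (fun s r => eval_dpoly B p t r s * radial_weight n r)
     (fun s r => eval_dpoly B (dpoly_deriv dirZ p) t r s * radial_weight n r)
     (fun s r => eval_dpoly B (dpoly_deriv dirZ (dpoly_deriv dirZ p)) t r s * radial_weight n r)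
     z 1 C ltac:(lra)); intros s r Hs.
  - split; apply is_derive_Rmult_const_r, (is_partial_eval_dpoly _ dirZ); lra.
  - destruct (HC t r s Ht) as [H1 [H2 H3]].
    assert (C * lorentz r * lorentz s <= C * lorentz r) by (apply scale_lorentz_le; auto).
    repeat split; lra.
  - split; apply continuous_weighted_r; lra.
Qed.

Lemma continuous_inner_z p t z : decaying p -> a <= t <= b ->
  continuous (fun s => inner_int B n p t s) z.
Proof.
  intros Hp Ht. apply (ex_derive_continuous (K := R_AbsRing) (V := R_NormedModule)).
  eexists. apply is_derive_inner_z; auto.
Qed.

Lemma is_RInt_gen_plane p t : decaying p -> a <= t <= b ->
  is_RInt_gen (fun z => inner_int B n p t z) (Rbar_locally m_infty) (Rbar_locally p_infty)
    (plane_int B n p t).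
Proof.
  intros Hp Ht. destruct (inner_int_le_lorentz p Hp) as [C [HC0 HC]].
  apply (is_RInt_gen_dominated _ _ atan_range_line _ C); intros z.
  - apply continuous_inner_z; auto.
  - apply HC; auto.
Qed.

Lemma is_derive_plane_t p t : decaying p -> a < t < b ->
  is_derive (fun s => plane_int B n p s) t (plane_int B n (dpoly_deriv dirT p) t).
Proof.
  intros Hp Ht.
  pose proof (decaying_deriv dirT p Hp) as Hp1. pose proof (decaying_deriv dirT _ Hp1) as Hp2.
  destruct (inner_int_le_lorentz p Hp) as [C1 [P1 H1]].
  destruct (inner_int_le_lorentz _ Hp1) as [C2 [P2 H2]].
  destruct (inner_int_le_lorentz _ Hp2) as [C3 [P3 H3]].
  assert (Hdl : 0 < Rmin (t - a) (b - t)) by (apply Rmin_pos; lra).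
  apply (is_derive_RInt_gen_param _ _ atan_range_line (fun s z => inner_int B n p s z)
     (fun s z => inner_int B n (dpoly_deriv dirT p) s z)
     (fun s z => inner_int B n (dpoly_deriv dirT (dpoly_deriv dirT p)) s z) t _ (C1 + C2 + C3) Hdl);
    intros s z Hs; pose proof (Rabs_lt_Rmin_between s t a b Ht Hs).
  - split; apply is_derive_inner_t; auto.
  - assert (Hs' : a <= s <= b) by lra. pose proof (lorentz_gt0 z).
    pose proof (H1 s z Hs'). pose proof (H2 s z Hs'). pose proof (H3 s z Hs').
    repeat split; nra.
  - split; apply continuous_inner_z; auto; lra.
Qed.

Lemma is_RInt_gen_inner_dz p t : decaying p -> a <= t <= b ->
  is_RInt_gen (fun z => inner_int B n (dpoly_deriv dirZ p) t z)
    (Rbar_locally m_infty) (Rbar_locally p_infty) 0.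
Proof.
  intros Hp Ht. destruct (inner_int_le_lorentz p Hp) as [C [HC0 HC]].
  destruct (lorentz_dominated_vanish (fun z => inner_int B n p t z) C) as [Lp Lm];
    [intros; apply HC; auto|].
  assert (ED : forall z,
             Derive (fun s => inner_int B n p t s) z = inner_int B n (dpoly_deriv dirZ p) t z).
  { intros z. apply is_derive_unique, is_derive_inner_z; auto. }
  apply (is_RInt_gen_ext (Derive (fun s => inner_int B n p t s))).
  - apply filter_forall. intros ab x _. apply ED.
  - replace 0 with (0 - 0) by ring. apply is_RInt_gen_Derive; auto.
    + apply filter_forall. intros ab x _. eexists. apply is_derive_inner_z; auto.
    + apply filter_forall. intros ab x _.
      apply (continuous_ext (fun z => inner_int B n (dpoly_deriv dirZ p) t z)).
      * intros; symmetry; apply ED.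
      * apply continuous_inner_z; auto. apply decaying_deriv; auto.
Qed.

Lemma inner_int_lin p q al be t z : decaying p -> decaying q -> a <= t <= b ->
  inner_int B n (DAdd (DScale al p) (DScale be q)) t z
  = al * inner_int B n p t z + be * inner_int B n q t z.
Proof.
  intros Hp Hq Ht.
  apply (is_RInt_gen_uniq _ _ atan_range_half_line
           (fun r => eval_dpoly B (DAdd (DScale al p) (DScale be q)) t r z * radial_weight n r)).
  - apply is_RInt_gen_inner; simpl; auto.
  - apply (is_RInt_gen_lin_comb _ _ atan_range_half_line
             _ _ _ _ _ _ _ (is_RInt_gen_inner p t z Hp Ht) (is_RInt_gen_inner q t z Hq Ht)).
    intros r. simpl. ring.
Qed.

Lemma plane_int_lin p q al be t : decaying p -> decaying q -> a <= t <= b ->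
  plane_int B n (DAdd (DScale al p) (DScale be q)) t
  = al * plane_int B n p t + be * plane_int B n q t.
Proof.
  intros Hp Hq Ht.
  apply (is_RInt_gen_uniq _ _ atan_range_line
           (fun z => inner_int B n (DAdd (DScale al p) (DScale be q)) t z)).
  - apply is_RInt_gen_plane; simpl; auto.
  - apply (is_RInt_gen_lin_comb _ _ atan_range_line
             _ _ _ _ _ _ _ (is_RInt_gen_plane p t Hp Ht) (is_RInt_gen_plane q t Hq Ht)).
    intros z. apply inner_int_lin; auto.
Qed.

(* [r^n (A_r + (n/r) A) = (r^n A)_r], and [r^n A] vanishes at [r = 0] (as [n >= 1]) and at
   infinity. *)
Lemma inner_int_radial_divergence h A t z : decaying h -> decaying A -> a <= t <= b ->
  (forall r, 0 < r -> eval_dpoly B h t r z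
     = eval_dpoly B (dpoly_deriv dirR A) t r z + n / r * eval_dpoly B A t r z) ->
  inner_int B n h t z = 0.
Proof.
  intros Hh HA Ht Hdiv.
  destruct (weighted_le_lorentz h Hh) as [Ch [HCh0 HCh]].
  destruct (weighted_le_lorentz A HA) as [Ca [_ HCa]].
  apply (is_RInt_gen_uniq _ _ atan_range_half_line
           (fun r => eval_dpoly B h t r z * radial_weight n r)); [apply is_RInt_gen_inner; auto|].
  assert (Hflux : is_RInt_gen (fun r => eval_dpoly B h t r z * radial_weight n r)
                    (at_point 0) (Rbar_locally p_infty)
                    (0 - eval_dpoly B A t 0 z * radial_weight n 0)).
  { apply (is_RInt_gen_half_line_derive (fun r => eval_dpoly B A t r z * radial_weight n r) _ Ch).
    - intros r Hr. rewrite Hdiv by auto.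
      replace ((eval_dpoly B (dpoly_deriv dirR A) t r z + n / r * eval_dpoly B A t r z)
                 * radial_weight n r)
        with (eval_dpoly B (dpoly_deriv dirR A) t r z * radial_weight n r
              + eval_dpoly B A t r z * (n / r * radial_weight n r)) by ring.
      pose proof (is_partial_eval_dpoly A dirR t r z ltac:(lra)) as HAr.
      exact (is_derive_Rmult _ _ _ _ _ HAr (is_derive_radial_weight n r Hr)).
    - intros r. apply continuous_weighted_r. lra.
    - intros r. eapply Rle_trans; [apply HCh; auto|].
      pose proof (lorentz_le1 r). pose proof (lorentz_le1 z).
      pose proof (lorentz_gt0 r). pose proof (lorentz_gt0 z).
      assert (lorentz r * lorentz z <= 1) by nra.
      nra.
    - apply continuous_weighted_r. lra.
    - apply (lorentz_dominated_vanish _ (Ca * lorentz z)). intros r.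
      replace (Ca * lorentz z * lorentz r) with (Ca * lorentz r * lorentz z) by ring. auto. }
  rewrite radial_weight_nonpos, Rmult_0_r, Rminus_0_r in Hflux by lra. exact Hflux.
Qed.

Lemma plane_int_balance E A Bz X t : decaying E -> decaying A -> decaying Bz -> decaying X ->
  a <= t <= b ->
  (forall t r z, a <= t <= b -> 0 < r ->
     / 2 * eval_dpoly B (dpoly_deriv dirT E) t r z =
     eval_dpoly B X t r z + n / r * eval_dpoly B A t r z
     + eval_dpoly B (dpoly_deriv dirR A) t r z + eval_dpoly B (dpoly_deriv dirZ Bz) t r z) ->
  plane_int B n (dpoly_deriv dirT E) t = 2 * plane_int B n X t.
Proof.
  intros HE HA HB HX Ht Hbal.
  pose proof (decaying_deriv dirT E HE) as HEt. pose proof (decaying_deriv dirZ Bz HB) as HBz.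
  set (XB := DAdd (DScale 1 X) (DScale 1 (dpoly_deriv dirZ Bz))).
  assert (HXB : decaying XB) by (simpl; auto).
  assert (Hinner : forall z, inner_int B n (dpoly_deriv dirT E) t z
            = 2 * inner_int B n X t z + 2 * inner_int B n (dpoly_deriv dirZ Bz) t z).
  { intros z.
    assert (H0 : inner_int B n (DAdd (DScale (/ 2) (dpoly_deriv dirT E)) (DScale (-1) XB)) t z = 0).
    { apply (inner_int_radial_divergence _ A); simpl; auto.
      intros r Hr. rewrite (Hbal t r z Ht Hr). ring. }
    rewrite inner_int_lin in H0 by auto. unfold XB in H0.
    rewrite inner_int_lin in H0 by auto. lra. }
  transitivity (2 * plane_int B n X t + 2 * 0); [|ring].
  apply (is_RInt_gen_uniq _ _ atan_range_line (fun z => inner_int B n (dpoly_deriv dirT E) t z));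
    [apply is_RInt_gen_plane; auto|].
  apply (is_RInt_gen_lin_comb _ _ atan_range_line _ _ _ _ _ _ _ (is_RInt_gen_plane X t HX Ht)
           (is_RInt_gen_inner_dz Bz t HB Ht)).
  exact Hinner.
Qed.

Lemma plane_int_ge0 p t : decaying p -> a <= t <= b ->
  (forall r z, 0 < r -> 0 <= eval_dpoly B p t r z) -> 0 <= plane_int B n p t.
Proof.
  intros Hp Ht Hpos.
  apply (is_RInt_gen_ge0 _ _ atan_range_line (fun z => inner_int B n p t z));
    [apply is_RInt_gen_plane; auto|].
  intros z. apply (is_RInt_gen_ge0 _ _ atan_range_half_line
                     (fun r => eval_dpoly B p t r z * radial_weight n r));
    [apply is_RInt_gen_inner; auto|].
  intros r. destruct (Rlt_or_le 0 r).
  - apply Rmult_le_pos; [apply Hpos; auto | apply radial_weight_ge0].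
  - rewrite radial_weight_nonpos by auto. lra.
Qed.

Lemma int_half_plane_eq_plane_int p (F : R -> R -> R) t : decaying p -> a <= t <= b ->
  (forall r z, 0 < r -> F r z = eval_dpoly B p t r z * Rpower r n) ->
  int_half_plane F = plane_int B n p t.
Proof.
  intros Hp Ht HF. unfold int_half_plane, plane_int. symmetry.
  apply (RInt_gen_ext_eq (V := R_CompleteNormedModule));
    [intros z | eexists; apply is_RInt_gen_plane; auto].
  apply (RInt_gen_ext (V := R_CompleteNormedModule)); [|eexists; apply is_RInt_gen_inner; auto].
  exists (fun x => x = 0) (fun y => 0 < y).
  - reflexivity.
  - exists 0. auto.
  - intros x y -> Hy r Hr. simpl in Hr. rewrite Rmin_left, Rmax_right in Hr by lra.
    rewrite HF, radial_weight_pos by lra. reflexivity.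
Qed.

End Weighted_integrals.

Lemma cont3_continuity_2d_tr f t r z : cont3 f t r z -> continuity_2d_pt (fun u v => f u v z) t r.
Proof.
  intros H eps. destruct (cont3_ball f t r z H eps (cond_pos eps)) as [dl [Hdl Hd]].
  exists (mkposreal _ Hdl). intros u v Hu Hv. apply Hd; auto. rewrite Rminus_diag, Rabs_R0; auto.
Qed.

Lemma cont3_continuity_2d_tz f t r z : cont3 f t r z -> continuity_2d_pt (fun u v => f u r v) t z.
Proof.
  intros H eps. destruct (cont3_ball f t r z H eps (cond_pos eps)) as [dl [Hdl Hd]].
  exists (mkposreal _ Hdl). intros u v Hu Hv. apply Hd; auto. rewrite Rminus_diag, Rabs_R0; auto.
Qed.

Lemma cont3_continuity_2d_rz f t r z : cont3 f t r z -> continuity_2d_pt (fun u v => f t u v) r z.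
Proof.
  intros H eps. destruct (cont3_ball f t r z H eps (cond_pos eps)) as [dl [Hdl Hd]].
  exists (mkposreal _ Hdl). intros u v Hu Hv. apply Hd; auto. rewrite Rminus_diag, Rabs_R0; auto.
Qed.

Section Smooth_field.

Variables (T : R) (F : fn3).
Hypothesis F_smooth : smooth_slab T F.

Let ex_partial_F l d t r z (Ht : 0 < t < T) : ex_partial d (Dmulti l F) t r z :=
  proj2 (F_smooth l t r z Ht) d.
Let cont3_F l t r z (Ht : 0 < t < T) : cont3 (Dmulti l F) t r z := proj1 (F_smooth l t r z Ht).

Lemma locally_time_slab t : 0 < t < T -> locally t (fun s => 0 < s < T).
Proof.
  intros Ht. assert (Hd : 0 < Rmin t (T - t)) by (apply Rmin_pos; lra).
  exists (mkposreal _ Hd). intros s Hs. change (Rabs (s - t) < Rmin t (T - t)) in Hs.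
  pose proof (Rmin_l t (T - t)). pose proof (Rmin_r t (T - t)).
  destruct (Rabs_def2 _ _ Hs). lra.
Qed.

Lemma Dr_Dz_comm l t r z : 0 < t < T ->
  Dr (Dz (Dmulti l F)) t r z = Dz (Dr (Dmulti l F)) t r z.
Proof.
  intros Ht. apply (Schwarz (fun x y => Dmulti l F t x y) r z).
  - apply locally_2d_forall. intros u v.
    repeat split; [apply (ex_partial_F l dirR) | apply (ex_partial_F l dirZ)
      | apply (ex_partial_F (dirZ :: l) dirR) | apply (ex_partial_F (dirR :: l) dirZ)]; auto.
  - exact (cont3_continuity_2d_rz (Dmulti (dirR :: dirZ :: l) F) t r z
             (cont3_F (dirR :: dirZ :: l) t r z Ht)).
  - exact (cont3_continuity_2d_rz (Dmulti (dirZ :: dirR :: l) F) t r z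
             (cont3_F (dirZ :: dirR :: l) t r z Ht)).
Qed.

Lemma Dt_Dr_comm l t r z : 0 < t < T ->
  Dt (Dr (Dmulti l F)) t r z = Dr (Dt (Dmulti l F)) t r z.
Proof.
  intros Ht. apply (Schwarz (fun x y => Dmulti l F x y z) t r).
  - destruct (locally_time_slab t Ht) as [d Hd]. exists d. intros u v Hu _.
    specialize (Hd u Hu).
    repeat split; [apply (ex_partial_F l dirT) | apply (ex_partial_F l dirR)
      | apply (ex_partial_F (dirR :: l) dirT) | apply (ex_partial_F (dirT :: l) dirR)]; auto.
  - exact (cont3_continuity_2d_tr (Dmulti (dirT :: dirR :: l) F) t r z
             (cont3_F (dirT :: dirR :: l) t r z Ht)).
  - exact (cont3_continuity_2d_tr (Dmulti (dirR :: dirT :: l) F) t r z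
             (cont3_F (dirR :: dirT :: l) t r z Ht)).
Qed.

Lemma Dt_Dz_comm l t r z : 0 < t < T ->
  Dt (Dz (Dmulti l F)) t r z = Dz (Dt (Dmulti l F)) t r z.
Proof.
  intros Ht. apply (Schwarz (fun x y => Dmulti l F x r y) t z).
  - destruct (locally_time_slab t Ht) as [d Hd]. exists d. intros u v Hu _.
    specialize (Hd u Hu).
    repeat split; [apply (ex_partial_F l dirT) | apply (ex_partial_F l dirZ)
      | apply (ex_partial_F (dirZ :: l) dirT) | apply (ex_partial_F (dirT :: l) dirZ)]; auto.
  - exact (cont3_continuity_2d_tz (Dmulti (dirT :: dirZ :: l) F) t r z
             (cont3_F (dirT :: dirZ :: l) t r z Ht)).
  - exact (cont3_continuity_2d_tz (Dmulti (dirZ :: dirT :: l) F) t r z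
             (cont3_F (dirZ :: dirT :: l) t r z Ht)).
Qed.

Lemma Dz_sq t r z : 0 < t < T ->
  Dz (fun t' r' z' => F t' r' z' ^ 2) t r z = 2 * F t r z * Dz F t r z.
Proof.
  intros Ht. unfold Dz at 1. apply is_derive_unique.
  apply (is_derive_ext (fun s => F t r s * F t r s)); [intros s; simpl; ring|].
  replace (2 * F t r z * Dz F t r z) with (Dz F t r z * F t r z + F t r z * Dz F t r z) by ring.
  pose proof (ex_partial_F nil dirZ t r z Ht) as HF. apply Derive_correct in HF.
  exact (is_derive_Rmult _ _ _ _ _ HF HF).
Qed.

Lemma Dt_of_Lap n (w : fn3) : (forall t r z, 0 < t < T -> 0 < r -> - Lap n F t r z = w t r z) ->
  forall t r z, 0 < t < T -> 0 < r ->
  Dt w t r z = - (Dt (Dr (Dr F)) t r z + n / r * Dt (Dr F) t r z + Dt (Dz (Dz F)) t r z).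
Proof.
  intros HL t r z Ht Hr. unfold Dt at 1. apply is_derive_unique.
  apply (is_derive_ext_loc (fun s => - (Dr (Dr F) s r z + n / r * Dr F s r z + Dz (Dz F) s r z))).
  - apply (filter_imp (fun s => 0 < s < T)); [|apply locally_time_slab; auto].
    intros s Hs. rewrite <- HL by auto. reflexivity.
  - pose proof (Derive_correct _ _ (ex_partial_F (dirR :: dirR :: nil) dirT t r z Ht)) as H1.
    pose proof (Derive_correct _ _ (ex_partial_F (dirR :: nil) dirT t r z Ht)) as H2.
    pose proof (Derive_correct _ _ (ex_partial_F (dirZ :: dirZ :: nil) dirT t r z Ht)) as H3.
    apply (is_derive_opp (V := R_NormedModule)).
    apply is_derive_Rplus; [apply is_derive_Rplus|]; auto. apply is_derive_scal. auto.
Qed.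

End Smooth_field.

(** * The energy identity *)

Definition fields (u w psi : fn3) (i : nat) : fn3 :=
  match i with 0%nat => u | 1%nat => w | _ => psi end.

Definition Fu (l : list dir) : dpoly := DField 0 l.
Definition Fw (l : list dir) : dpoly := DField 1 l.
Definition Fpsi (l : list dir) : dpoly := DField 2 l.

Definition dp_ur : dpoly := DScale (-1) (DMul DRadius (Fpsi (dirZ :: nil))).
Definition dp_uz (n : R) : dpoly :=
  DAdd (DScale ((n + 1) / 2) (Fpsi nil)) (DMul DRadius (Fpsi (dirR :: nil))).
Definition energy_coef (n : R) : R := (7 - n) / 4.

Definition energy_density (n : R) : dpoly :=
  DAdd (DMul (Fu nil) (Fu nil))
    (DScale (energy_coef n) (DAdd (DMul (Fpsi (dirR :: nil)) (Fpsi (dirR :: nil)))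
                                  (DMul (Fpsi (dirZ :: nil)) (Fpsi (dirZ :: nil))))).

Definition grad_u_sq : dpoly :=
  DAdd (DMul (Fu (dirR :: nil)) (Fu (dirR :: nil))) (DMul (Fu (dirZ :: nil)) (Fu (dirZ :: nil))).
Definition w_sq : dpoly := DMul (Fw nil) (Fw nil).
Definition dissipation (n nu1 nu2 : R) : dpoly :=
  DAdd (DScale (- nu1) grad_u_sq) (DScale (- (nu2 * energy_coef n)) w_sq).

(* The fluxes of the local energy balance: viscous terms, transport of [u^2 / 2], and the
   terms produced by testing the [w]-equation against [psi]. *)
Definition radial_flux (n nu1 nu2 : R) : dpoly :=
  DAdd (DScale nu1 (DMul (Fu nil) (Fu (dirR :: nil))))
  (DAdd (DScale (-1/2) (DMul dp_ur (DMul (Fu nil) (Fu nil))))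
  (DAdd (DScale (energy_coef n) (DMul (Fpsi nil) (Fpsi (dirR :: dirT :: nil))))
  (DAdd (DScale (- energy_coef n) (DMul (Fpsi nil) (DMul dp_ur (Fw nil))))
        (DScale (energy_coef n * nu2)
           (DAdd (DMul (Fpsi nil) (Fw (dirR :: nil)))
                 (DScale (-1) (DMul (Fw nil) (Fpsi (dirR :: nil))))))))).

Definition axial_flux (n nu1 nu2 : R) : dpoly :=
  DAdd (DScale nu1 (DMul (Fu nil) (Fu (dirZ :: nil))))
  (DAdd (DScale (-1/2) (DMul (dp_uz n) (DMul (Fu nil) (Fu nil))))
  (DAdd (DScale (energy_coef n) (DMul (Fpsi nil) (Fpsi (dirZ :: dirT :: nil))))
  (DAdd (DScale (energy_coef n) (DMul (Fpsi nil) (DMul (Fu nil) (Fu nil))))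
  (DAdd (DScale (- energy_coef n) (DMul (Fpsi nil) (DMul (dp_uz n) (Fw nil))))
        (DScale (energy_coef n * nu2)
           (DAdd (DMul (Fpsi nil) (Fw (dirZ :: nil)))
                 (DScale (-1) (DMul (Fw nil) (Fpsi (dirZ :: nil)))))))))).

Definition grad_u_int (n : R) (u : fn3) (t : R) : R :=
  int_half_plane (fun r z => (Dr u t r z ^ 2 + Dz u t r z ^ 2) * Rpower r n).

Definition lap_int (n : R) (psi : fn3) (t : R) : R :=
  int_half_plane (fun r z => Lap n psi t r z ^ 2 * Rpower r n).

Section Generalized_Boussinesq.

Variables (n nu1 nu2 T : R) (u w psi : fn3).
Hypotheses (u_smooth : smooth_slab T u) (w_smooth : smooth_slab T w)
           (psi_smooth : smooth_slab T psi).
Hypotheses (u_decay : rapid_decay T u) (w_decay : rapid_decay T w) (psi_decay : rapid_decay T psi).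
Hypothesis n_range : 1 <= n <= 7.

Let m := (n + 3) / 2.
Let ur : fn3 := fun t r z => - r * Dz psi t r z.
Let uz : fn3 := fun t r z => (m - 1) * psi t r z + r * Dr psi t r z.

Hypothesis u_eq : forall t r z, 0 < t < T -> 0 < r ->
  Dt u t r z + ur t r z * Dr u t r z + uz t r z * Dz u t r z
  = 2 * u t r z * Dz psi t r z + nu1 * Lap n u t r z.
Hypothesis w_eq : forall t r z, 0 < t < T -> 0 < r ->
  Dt w t r z + ur t r z * Dr w t r z + uz t r z * Dz w t r z
  = Dz (fun t' r' z' => u t' r' z' ^ 2) t r z + nu2 * Lap n w t r z.
Hypothesis psi_eq : forall t r z, 0 < t < T -> 0 < r -> - Lap n psi t r z = w t r z.

Let B := fields u w psi.

Lemma energy_density_balance t r z : 0 < t < T -> 0 < r ->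
  / 2 * eval_dpoly B (dpoly_deriv dirT (energy_density n)) t r z =
  eval_dpoly B (dissipation n nu1 nu2) t r z + n / r * eval_dpoly B (radial_flux n nu1 nu2) t r z
  + eval_dpoly B (dpoly_deriv dirR (radial_flux n nu1 nu2)) t r z
  + eval_dpoly B (dpoly_deriv dirZ (axial_flux n nu1 nu2)) t r z.
Proof.
  intros Ht Hr. unfold B. simpl.
  pose proof (Dt_Dr_comm T psi psi_smooth nil t r z Ht) as C1.
  pose proof (Dt_Dz_comm T psi psi_smooth nil t r z Ht) as C2.
  pose proof (Dr_Dz_comm T psi psi_smooth nil t r z Ht) as C3. simpl in C1, C2, C3.
  assert (C4 : Dt (Dr (Dr psi)) t r z = Dr (Dr (Dt psi)) t r z).
  { pose proof (Dt_Dr_comm T psi psi_smooth (dirR :: nil) t r z Ht) as C. simpl in C. rewrite C.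
    unfold Dr at 1 3. apply Derive_ext. intros s.
    exact (Dt_Dr_comm T psi psi_smooth nil t s z Ht). }
  assert (C5 : Dt (Dz (Dz psi)) t r z = Dz (Dz (Dt psi)) t r z).
  { pose proof (Dt_Dz_comm T psi psi_smooth (dirZ :: nil) t r z Ht) as C. simpl in C. rewrite C.
    unfold Dz at 1 3. apply Derive_ext. intros s.
    exact (Dt_Dz_comm T psi psi_smooth nil t r s Ht). }
  pose proof (w_eq t r z Ht Hr) as Ew.
  rewrite (Dz_sq T u u_smooth t r z Ht), (Dt_of_Lap T psi psi_smooth n w psi_eq t r z Ht Hr),
    C1, C4, C5 in Ew.
  pose proof (u_eq t r z Ht Hr) as Eu.
  pose proof (psi_eq t r z Ht Hr) as Epsi. unfold Lap in Epsi.
  assert (Epsi_zz : Dz (Dz psi) t r z = - w t r z - Dr (Dr psi) t r z - n / r * Dr psi t r z)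
    by lra.
  assert (Ew_zz : Dz (Dz (Dt psi)) t r z =
     - (Dr (Dr (Dt psi)) t r z + n / r * Dr (Dt psi) t r z)
     - (2 * u t r z * Dz u t r z + nu2 * Lap n w t r z
        - ur t r z * Dr w t r z - uz t r z * Dz w t r z))
    by lra.
  assert (Eu_t : Dt u t r z = 2 * u t r z * Dz psi t r z + nu1 * Lap n u t r z
                              - ur t r z * Dr u t r z - uz t r z * Dz u t r z) by lra.
  rewrite C1, C2, <- C3, Eu_t, Ew_zz, Epsi_zz.
  unfold ur, uz, m, Lap, energy_coef. field. lra.
Qed.

Lemma fields_smooth i : smooth_slab T (B i).
Proof. destruct i as [|[|i]]; auto. Qed.

Lemma fields_decay i : rapid_decay T (B i).
Proof. destruct i as [|[|i]]; auto. Qed.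

Section Time_window.

Variables a b : R.
Hypotheses (a_gt0 : 0 < a) (a_le_b : a <= b) (b_lt_T : b < T).

Let to_plane_int := int_half_plane_eq_plane_int B T a b n fields_smooth fields_decay
                      a_gt0 a_le_b b_lt_T n_range.
Let plane_ge0 := plane_int_ge0 B T a b n fields_smooth fields_decay a_gt0 a_le_b b_lt_T n_range.

Lemma energy_eq_plane_int s : a <= s <= b ->
  energy n u psi s = plane_int B n (energy_density n) s.
Proof.
  intros Hs. apply to_plane_int; [simpl; tauto | auto |].
  intros r z Hr. simpl. unfold energy_coef. ring.
Qed.

Lemma grad_u_int_eq_plane_int s : a <= s <= b -> grad_u_int n u s = plane_int B n grad_u_sq s.
Proof. intros Hs. apply to_plane_int; [simpl; tauto | auto |]. intros r z Hr. simpl. ring. Qed.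

Lemma lap_int_eq_plane_int s : a <= s <= b -> lap_int n psi s = plane_int B n w_sq s.
Proof.
  intros Hs. apply to_plane_int; [simpl; tauto | auto |].
  intros r z Hr. simpl. rewrite <- (psi_eq s r z) by lra. ring.
Qed.

Lemma energy_ge0_on s : a <= s <= b -> 0 <= energy n u psi s.
Proof.
  intros Hs. rewrite energy_eq_plane_int by auto.
  apply plane_ge0; [simpl; tauto | auto |].
  intros r z Hr. simpl. unfold energy_coef.
  pose proof (pow2_ge_0 (u s r z)). pose proof (pow2_ge_0 (Dr psi s r z)).
  pose proof (pow2_ge_0 (Dz psi s r z)). simpl in *. nra.
Qed.

Lemma dissipation_rate_le0_on (nu1_ge0 : 0 <= nu1) (nu2_ge0 : 0 <= nu2) s : a <= s <= b ->
  - nu1 * grad_u_int n u s - nu2 * energy_coef n * lap_int n psi s <= 0.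
Proof.
  intros Hs. rewrite grad_u_int_eq_plane_int, lap_int_eq_plane_int by auto.
  assert (H1 : 0 <= plane_int B n grad_u_sq s)
    by (apply plane_ge0; [simpl; tauto | auto | intros r z Hr; simpl; nra]).
  assert (H2 : 0 <= plane_int B n w_sq s)
    by (apply plane_ge0; [simpl; tauto | auto | intros r z Hr; simpl; nra]).
  assert (0 <= energy_coef n) by (unfold energy_coef; lra).
  pose proof (Rmult_le_pos _ _ nu2_ge0 H). nra.
Qed.

Lemma is_derive_plane_int_half_energy t : a < t < b ->
  is_derive (fun s => / 2 * plane_int B n (energy_density n) s) t
    (- nu1 * plane_int B n grad_u_sq t - nu2 * energy_coef n * plane_int B n w_sq t).
Proof.
  intros Ht.
  assert (Hbal : plane_int B n (dpoly_deriv dirT (energy_density n)) t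
                 = 2 * plane_int B n (dissipation n nu1 nu2) t).
  { apply (plane_int_balance B T a b n fields_smooth fields_decay a_gt0 a_le_b b_lt_T n_range
             _ (radial_flux n nu1 nu2) (axial_flux n nu1 nu2)); simpl; try tauto; try lra.
    intros t' r z Ht' Hr. apply energy_density_balance; auto. lra. }
  replace (- nu1 * plane_int B n grad_u_sq t - nu2 * energy_coef n * plane_int B n w_sq t)
    with (/ 2 * plane_int B n (dpoly_deriv dirT (energy_density n)) t).
  - apply is_derive_scal, (is_derive_plane_t B T a b n fields_smooth fields_decay
                             a_gt0 a_le_b b_lt_T n_range); [simpl; tauto | auto].
  - rewrite Hbal. unfold dissipation.
    rewrite (plane_int_lin B T a b n fields_smooth fields_decay a_gt0 a_le_b b_lt_T n_range)
      by (simpl; tauto || lra).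
    field.
Qed.

End Time_window.

Lemma is_derive_half_energy t : 0 < t < T ->
  is_derive (fun s => / 2 * energy n u psi s) t
    (- nu1 * grad_u_int n u t - nu2 * energy_coef n * lap_int n psi t).
Proof.
  intros Ht. set (a := t / 2). set (b := (t + T) / 2).
  assert (Ha : 0 < a) by (unfold a; lra). assert (Hb : b < T) by (unfold b; lra).
  assert (Hab : a < t < b) by (unfold a, b; lra).
  rewrite (grad_u_int_eq_plane_int a b), (lap_int_eq_plane_int a b) by lra.
  apply (is_derive_ext_loc (fun s => / 2 * plane_int B n (energy_density n) s)).
  - assert (Hd : 0 < Rmin (t - a) (b - t)) by (apply Rmin_pos; lra).
    exists (mkposreal _ Hd). intros s Hs.
    pose proof (Rabs_lt_Rmin_between s t a b Hab Hs).
    rewrite (energy_eq_plane_int a b) by lra. reflexivity.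
  - apply (is_derive_plane_int_half_energy a b); lra.
Qed.

Lemma energy_ge0 t : 0 < t < T -> 0 <= energy n u psi t.
Proof. intros Ht. apply (energy_ge0_on t t); lra. Qed.

Lemma dissipation_rate_le0 (nu1_ge0 : 0 <= nu1) (nu2_ge0 : 0 <= nu2) t : 0 < t < T ->
  - nu1 * grad_u_int n u t - nu2 * energy_coef n * lap_int n psi t <= 0.
Proof. intros Ht. apply (dissipation_rate_le0_on t t); lra. Qed.

End Generalized_Boussinesq.

Theorem mainTheorem4 (n nu1 nu2 T : R) (u w psi : fn3) :
  2 <= n -> n < 7 -> 0 <= nu1 -> 0 <= nu2 -> 0 < T ->
  smooth_slab T u -> smooth_slab T w -> smooth_slab T psi ->
  even_r u -> even_r w -> even_r psi ->
  rapid_decay T u -> rapid_decay T w -> rapid_decay T psi ->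
  let m := (n + 3) / 2 in
  let ur : fn3 := fun t r z => - r * Dz psi t r z in
  let uz : fn3 := fun t r z => (m - 1) * psi t r z + r * Dr psi t r z in
  (forall t r z, 0 < t < T -> 0 < r ->
     Dt u t r z + ur t r z * Dr u t r z + uz t r z * Dz u t r z
     = 2 * u t r z * Dz psi t r z + nu1 * Lap n u t r z) ->
  (forall t r z, 0 < t < T -> 0 < r ->
     Dt w t r z + ur t r z * Dr w t r z + uz t r z * Dz w t r z
     = Dz (fun t' r' z' => u t' r' z' ^ 2) t r z + nu2 * Lap n w t r z) ->
  (forall t r z, 0 < t < T -> 0 < r -> - Lap n psi t r z = w t r z) ->
  (forall t, 0 < t < T ->
     is_derive (fun s => / 2 * energy n u psi s) t
       (- nu1 * int_half_plane (fun r z =>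
                  (Dr u t r z ^ 2 + Dz u t r z ^ 2) * Rpower r n)
        - nu2 * ((7 - n) / 4) * int_half_plane (fun r z =>
                  Lap n psi t r z ^ 2 * Rpower r n)))
  /\ (forall t, 0 < t < T -> 0 <= energy n u psi t)
  /\ (forall t1 t2, 0 < t1 -> t1 <= t2 -> t2 < T ->
        energy n u psi t2 <= energy n u psi t1)
  /\ (nu1 = 0 -> nu2 = 0 -> forall t1 t2, 0 < t1 < T -> 0 < t2 < T ->
        energy n u psi t1 = energy n u psi t2).
Proof.
  intros Hn2 Hn7 Hnu1 Hnu2 _ Su Sw Sp _ _ _ Du Dw Dp m ur uz Hu Hw Hpsi.
  assert (Hn : 1 <= n <= 7) by lra.
  pose proof (is_derive_half_energy n nu1 nu2 T u w psi Su Sw Sp Du Dw Dp Hn Hu Hw Hpsi) as Hder.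
  pose proof (dissipation_rate_le0 n nu1 nu2 T u w psi Su Sw Sp Du Dw Dp Hn Hpsi Hnu1 Hnu2)
    as Hrate.
  split; [|split; [|split]].
  - exact Hder.
  - exact (energy_ge0 n T u w psi Su Sw Sp Du Dw Dp Hn).
  - intros t1 t2 H1 H12 H2.
    pose proof (is_derive_nonpos_antitone _ _ 0 T Hder Hrate t1 t2 H1 H12 H2). lra.
  - intros -> -> t1 t2 H1 H2.
    assert (E : / 2 * energy n u psi t1 = / 2 * energy n u psi t2).
    { apply (is_derive_0_const _ _ 0 T Hder); auto. intros. ring. }
    lra.
Qed.
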